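(* Let $\mathcal{R}$ be a cell space, let $A,A'\subseteq M$ and let $\mathfrak{g},\mathfrak{g}'\in G/G_0$. Then for every $m\in(\cdot\triangleleft\mathfrak{g})^{-1}(A)\setminus(\cdot\triangleleft\mathfrak{g}')^{-1}(A')$ we have $m\triangleleft\mathfrak{g}\in\bigcup_{g\in\mathfrak{g}}\big(A\setminus(\cdot\triangleleft g^{-1}\cdot\mathfrak{g}')^{-1}(A')\big)$ and $m\triangleleft\mathfrak{g}'\in\bigcup_{g'\in\mathfrak{g}'}\big((\cdot\triangleleft(g')^{-1}\cdot\mathfrak{g})^{-1}(A)\setminus A'\big)$.
   Context: A cell space $\mathcal{R}$ consists of a group $G$ acting transitively on the left on a nonempty set $M$ via $\triangleright$, a point $m_0\in M$ and a family $(g_{m_0,m})_{m\in M}$ in $G$ with $g_{m_0,m}\triangleright m_0=m$. $G_0$ is the stabiliser of $m_0$, $G/G_0$ the set of left cosets (elements are subsets of $G$), with $G$ acting by $g\cdot hG_0=ghG_0$. The right semi-action $\triangleleft\colon M\times G/G_0\to M$ is $m\triangleleft gG_0=g_{m_0,m}g\triangleright m_0$, and $(\cdot\triangleleft\mathfrak{h})^{-1}(B)=\{m\in M: m\triangleleft\mathfrak{h}\in B\}$. *)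

From HB Require Import structures.
From mathcomp Require Import all_boot.
From mathcomp Require Import boolp classical_sets.
Set Implicit Arguments.
Unset Strict Implicit.
Unset Printing Implicit Defensive.
Local Open Scope group_scope.
Local Open Scope classical_set_scope.

(* A cell space: a group G acting transitively on the left on a nonempty set M,
   a base point m0 and a family (g_{m0,m})_m with g_{m0,m} |> m0 = m. *)
Record cell_space (G : groupType) (M : Type) := CellSpace {
  act : G -> M -> M;
  act1 : forall m, act 1 m = m;
  actM : forall g h m, act (g * h) m = act g (act h m);
  act_trans : forall m m', exists g, act g m = m';
  m0 : M;
  gfam : M -> G;
  gfamP : forall m, act (gfam m) m0 = m
}.

Section CellSpaceDefs.
Variables (G : groupType) (M : Type) (R : cell_space G M).

Definition stab : set G := [set g | act R g (m0 R) = m0 R].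

Definition lcoset (h : G) : set G := [set h * k | k in stab].

(* elements of G/G_0 : subsets of G that are left cosets of G_0 *)
Definition is_lcoset (S : set G) : Prop := exists h, S = lcoset h.

Definition lmulS (g : G) (S : set G) : set G := [set g * s | s in S].

(* right semi-action m <| gG_0 = g_{m0,m} g |> m0, with g a (chosen)
   representative of the coset; well defined for cosets. *)
Definition semiact (m : M) (S : set G) : M :=
  act R (gfam R m * xget 1 S) (m0 R).

Definition semipre (S : set G) (B : set M) : set M :=
  [set m | B (semiact m S)].

End CellSpaceDefs.

(* The representatives [gfam (m <| S)] and [gfam m * x] (x in S) both send m0
   to [m <| S], so they differ by a stabiliser element s and [g := x * s] lies
   in S.  For t in T, [g^-1 t] represents [g^-1 . T] and
   [gfam (m <| S) * (g^-1 t) = gfam m * t], hence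
   [(m <| S) <| g^-1 . T = m <| T].  Applied to (gg, gg') and to (gg', gg)
   this places [m <| gg] and [m <| gg'] in the required unions. *)

From HB Require Import structures.
From mathcomp Require Import all_boot.
From mathcomp Require Import boolp classical_sets.
Local Open Scope group_scope.
Local Open Scope classical_set_scope.
Set Implicit Arguments.
Unset Strict Implicit.

Section CellSpaceFacts.
Variables (G : groupType) (M : Type) (R : cell_space G M).

Lemma actVK (g : G) (m : M) : act R g^-1 (act R g m) = m.
Proof. by rewrite -actM mulVg act1. Qed.

Lemma stab1 : stab R 1.
Proof. exact: act1. Qed.

Lemma stabV (k : G) : stab R k -> stab R k^-1.
Proof. by rewrite /stab /= => Hk; rewrite -{1}Hk actVK. Qed.

Lemma stabM (k l : G) : stab R k -> stab R l -> stab R (k * l).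
Proof. by rewrite /stab /= => Hk Hl; rewrite actM Hl Hk. Qed.

Lemma lcoset_xget (S : set G) : is_lcoset R S -> S (xget 1 S).
Proof.
by move=> [h ->]; apply: xgetPex; exists h, 1; rewrite ?mulg1 //; exact: stab1.
Qed.

Lemma lcoset_stab_divl (S : set G) (x y : G) :
  is_lcoset R S -> S x -> S y -> stab R (x^-1 * y).
Proof.
move=> [h ->] [k Hk <-] [l Hl <-].
by rewrite invgM -mulgA mulKg; apply: stabM => //; apply: stabV.
Qed.

Lemma lcosetMstab (S : set G) (x s : G) :
  is_lcoset R S -> S x -> stab R s -> S (x * s).
Proof.
by move=> [h ->] [k Hk <-] Hs; exists (k * s); [apply: stabM | rewrite mulgA].
Qed.

Lemma lmulS_lcoset (g : G) (S : set G) :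
  is_lcoset R S -> is_lcoset R (lmulS g S).
Proof.
move=> [h ->]; exists (g * h).
rewrite /lmulS /lcoset image_comp; apply: eq_imagel => k _ /=.
by rewrite mulgA.
Qed.

Lemma semiactE (m : M) (S : set G) (y : G) :
  is_lcoset R S -> S y -> semiact R m S = act R (gfam R m * y) (m0 R).
Proof.
move=> HS Sy; rewrite /semiact.
have Sx := lcoset_xget HS; set x := xget 1 S in Sx *.
have -> : gfam R m * y = gfam R m * x * (x^-1 * y) by rewrite -mulgA mulVKg.
by rewrite [RHS]actM (lcoset_stab_divl HS Sx Sy).
Qed.

Lemma semiact_lmulV (m : M) (S T : set G) :
  is_lcoset R S -> is_lcoset R T ->
  exists2 g, S g & semiact R (semiact R m S) (lmulS g^-1 T) = semiact R m T.
Proof.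
move=> HS HT.
have Sx := lcoset_xget HS; set x := xget 1 S in Sx *.
set p := semiact R m S.
set s := (gfam R m * x)^-1 * gfam R p.
have stab_s : stab R s by rewrite /stab /= actM gfamP actVK.
have gfam_p : gfam R m * (x * s) = gfam R p by rewrite mulgA mulVKg.
exists (x * s); first exact: lcosetMstab.
have Tt := lcoset_xget HT; set t := xget 1 T in Tt *.
have Tg : lmulS (x * s)^-1 T ((x * s)^-1 * t) by exists t.
rewrite (semiactE _ (lmulS_lcoset _ HT) Tg) -gfam_p.
by rewrite -mulgA mulVKg (semiactE _ HT Tt).
Qed.

End CellSpaceFacts.

Theorem lemma5 (G : groupType) (M : Type) (R : cell_space G M)
  (A A' : set M) (gg gg' : set G) :
  is_lcoset R gg -> is_lcoset R gg' ->
  forall m : M, (semipre R gg A `\` semipre R gg' A') m ->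
    (\bigcup_(g in gg) (A `\` semipre R (lmulS g^-1 gg') A')) (semiact R m gg)
    /\
    (\bigcup_(g' in gg') (semipre R (lmulS g'^-1 gg) A `\` A')) (semiact R m gg').
Proof.
move=> Hgg Hgg' m [Am A'm]; split.
- have [g gg_g E] := semiact_lmulV m Hgg Hgg'.
  by exists g => //; split; rewrite // /semipre /= E.
- have [g' gg'_g' E] := semiact_lmulV m Hgg' Hgg.
  by exists g' => //; split; rewrite // /semipre /= E.
Qed.
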